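(* Let $\mathcal{I}$ be a finite set of items, $u$ a user with real-valued preference scores $s_{ui}$ for $i \in \mathcal{I}$, and $\mathcal{P}_u \subseteq \mathcal{I}$ the set of positive items of $u$. Let $K \ge 1$ be an integer and $\tau_w, \tau_d > 0$. Define the ranking position $\pi_{ui} = \sum_{j \in \mathcal{I}} \mathbb{I}(s_{uj} \ge s_{ui})$, $$\mathrm{DCG}@K(u) = \sum_{i \in \mathcal{P}_u} \frac{\mathbb{I}(\pi_{ui} \le K)}{\log_2(\pi_{ui}+1)},$$ the Top-$K$ quantile $\beta_u^K = \inf\{ s_{ui} : i \in \mathcal{I},\ \pi_{ui} \le K\}$, the number of Top-$K$ hits $H_u^K = \sum_{i \in \mathcal{P}_u} \mathbb{I}(s_{ui} \ge \beta_u^K)$, and the loss $$\mathcal{L}_{\mathrm{SL@}K}(u) = \sum_{i \in \mathcal{P}_u} \sigma_w(s_{ui} - \beta_u^K)\cdot \log\Big( \sum_{j \in \mathcal{I}} \exp\big((s_{uj} - s_{ui})/\tau_d\big)\Big),$$ where $\sigma_w(x) = 1/(1 + \exp(-x/\tau_w))$. If $H_u^K > 1$, then $-\log \mathrm{DCG}@K(u) \le \mathcal{L}_{\mathrm{SL@}K}(u)$. If $H_u^K = 1$, then $-\frac{1}{2}\log \mathrm{DCG}@K(u) \le \mathcal{L}_{\mathrm{SL@}K}(u)$.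
   Context: $\mathbb{I}(\cdot)$ is the indicator function and $\log$ denotes the natural logarithm. $\mathcal{L}_{\mathrm{SL@}K}$ is called SoftmaxLoss@$K$ in the paper. *)

From HB Require Import structures.
From mathcomp Require Import all_boot all_order all_algebra.
From mathcomp Require Import all_classical all_reals all_analysis.
Set Implicit Arguments. Unset Strict Implicit. Unset Printing Implicit Defensive.
Import Order.TTheory GRing.Theory Num.Theory.
Local Open Scope ring_scope.
Local Open Scope classical_set_scope.

Definition rank_pos (R : realType) (I : finType) (s : I -> R) (i : I) : nat :=
  #|[set j | s i <= s j]|.

Definition DCG (R : realType) (I : finType) (K : nat) (s : I -> R) (P : {set I}) : R :=
  \sum_(i in P)
    ((rank_pos s i <= K)%N%:R / (ln ((rank_pos s i).+1%:R) / ln 2)).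

(* Top-K quantile beta = inf { s_i : pi_i <= K }, as an extended real
   (+oo if the set is empty). *)
Definition topK_quantile (R : realType) (I : finType) (K : nat) (s : I -> R) : \bar R :=
  ereal_inf [set (s i)%:E | i in [set i : I | (rank_pos s i <= K)%N]].

Definition hits (R : realType) (I : finType) (K : nat) (s : I -> R) (P : {set I}) : nat :=
  #|[set i in P | (topK_quantile K s <= (s i)%:E)%E]|.

Definition sigma_w (R : realType) (tw x : R) : R := 1 / (1 + expR (- x / tw)).

Definition SL_loss (R : realType) (I : finType) (K : nat) (tw td : R)
    (s : I -> R) (P : {set I}) : R :=
  \sum_(i in P)
    (sigma_w tw (s i - fine (topK_quantile K s)) *
     ln (\sum_(j : I) expR ((s j - s i) / td))).

From HB Require Import structures.
From mathcomp Require Import all_boot all_order all_algebra.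
From mathcomp Require Import all_classical all_reals all_analysis.
From mathcomp Require Import lra ring.
Import Order.TTheory GRing.Theory Num.Theory.
Set Implicit Arguments. Unset Strict Implicit. Unset Printing Implicit Defensive.
Local Open Scope ring_scope.

(* A Top-K hit i has rank r_i <= K, so its DCG gain 1/log2(r_i + 1) is at
   least 1/r_i; its loss weight sigma_w(s_i - beta) is at least 1/2, and its
   log-sum-exp is at least ln r_i because each of the r_i items scored at least
   s_i contributes a term >= 1.  All other terms of both sums are nonnegative.
   Two hits of ranks x, y thus give DCG >= 1/x + 1/y and loss >= (ln x + ln y)/2,
   and -ln (1/x + 1/y) = ln x + ln y - ln (x + y) <= (ln x + ln y)/2 since
   ln (x + y) dominates ln x and ln y.  One hit of rank x gives DCG >= 1/x and
   loss >= (ln x)/2. *)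

Lemma sumr_le_subset (R : numDomainType) (I : finType) (A B : {set I})
    (F : I -> R) :
  A \subset B -> (forall i, i \in B -> 0 <= F i) ->
  \sum_(i in A) F i <= \sum_(i in B) F i.
Proof.
move=> AB F0; rewrite [leRHS](big_setID A) /= (finset.setIidPr AB) lerDl.
by apply: sumr_ge0 => i /setDP[iB _]; exact: F0.
Qed.

Section Ranking.
Variables (R : realType) (I : finType) (s : I -> R).

Lemma rank_posE i : rank_pos s i = #|[pred j | s i <= s j]|.
Proof. by apply: eq_card => j; rewrite inE /=; apply/idP/idP => [/set_mem|/mem_set]. Qed.

Lemma rank_pos_gt0 i : (0 < rank_pos s i)%N.
Proof. by rewrite rank_posE; apply/card_gt0P; exists i; rewrite inE /=. Qed.

Lemma rank_pos_ge1 i : 1 <= (rank_pos s i)%:R :> R.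
Proof. by rewrite ler1n rank_pos_gt0. Qed.

Lemma rank_pos_le i j : s j <= s i -> (rank_pos s i <= rank_pos s j)%N.
Proof.
move=> sji; rewrite !rank_posE; apply: subset_leq_card; apply/fintype.subsetP => k.
rewrite !inE /=; exact: le_trans.
Qed.

Lemma rank_pos_le_sum_expR (td : R) i : 0 < td ->
  (rank_pos s i)%:R <= \sum_j expR ((s j - s i) / td).
Proof.
move=> td0; rewrite rank_posE -sum1_card natr_sum.
rewrite [leRHS](bigID (fun j => s i <= s j)) /= -[leLHS]addr0.
apply: lerD; last by apply: sumr_ge0 => j _; exact: expR_ge0.
apply: ler_sum => j sij; apply: le_trans (expR_ge1Dx _).
by rewrite lerDl divr_ge0 ?subr_ge0 // ltW.
Qed.

Lemma topK_quantile_attained K i : (topK_quantile K s <= (s i)%:E)%E ->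
  exists2 m, (rank_pos s m <= K)%N & topK_quantile K s = (s m)%:E.
Proof.
move=> qi; case: (pickP (fun j => rank_pos s j <= K)%N) => [j Kj | noK].
  have [m Km m_min] := @arg_minP _ _ _ j (fun k => rank_pos s k <= K)%N s Kj.
  exists m => //.
  apply/eqP; rewrite eq_le; apply/andP; split.
    by apply: ereal_inf_lbound; exists m.
  by apply: le_ereal_inf_tmp => x [k Kk <-]; rewrite lee_fin; exact: m_min.
have : (+oo <= topK_quantile K s)%E.
  by apply: le_ereal_inf_tmp => x [k Kk _]; move: Kk; rewrite /= noK.
by move=> /le_trans/(_ qi); rewrite leNgt ltey.
Qed.

Definition topK_hit_set K (P : {set I}) : {set I} :=
  [set i in P | (topK_quantile K s <= (s i)%:E)%E].

Lemma topK_hit_setP K P i : i \in topK_hit_set K P ->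
  [/\ i \in P, (rank_pos s i <= K)%N & fine (topK_quantile K s) <= s i].
Proof.
rewrite inE => /andP[iP qi]; have [m Km qm] := topK_quantile_attained qi.
move: qi; rewrite qm lee_fin => smi; split => //.
exact: leq_trans (rank_pos_le smi) Km.
Qed.

End Ranking.

Lemma ln_natS_le (R : realType) n : ln (n.+1%:R : R) <= n%:R * ln 2.
Proof.
case: n => [|n]; first by rewrite ln1 mul0r.
rewrite mulr_natl -lnXn ?ltr0n // ler_ln ?posrE ?exprn_gt0 ?ltr0n //.
by rewrite -natrX ler_nat ltn_expl.
Qed.

Lemma inv_le_dcg_gain (R : realType) n : (0 < n)%N ->
  n%:R^-1 <= 1 / (ln (n.+1%:R : R) / ln 2).
Proof.
move=> n0; have ln2 : 0 < ln (2 : R) by rewrite ln_gt0 ?ltr1n.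
have lnS : 0 < ln (n.+1%:R : R) by rewrite ln_gt0 ?ltr1n ?ltnS.
rewrite div1r invf_div ler_pdivlMr // mulrC ler_pdivrMr ?ltr0n //.
by rewrite mulrC ln_natS_le.
Qed.

Lemma sigma_w_gt0 (R : realType) (tw x : R) : 0 < sigma_w tw x.
Proof. by rewrite /sigma_w mul1r invr_gt0 ltr_pwDl ?expR_ge0. Qed.

Lemma sigma_w_ge_half (R : realType) (tw x : R) : 0 < tw -> 0 <= x ->
  2^-1 <= sigma_w tw x.
Proof.
move=> tw0 x0; rewrite /sigma_w div1r lef_pV2 ?posrE ?ltr_pwDl ?expR_ge0 //.
by rewrite -[2]/(1 + 1) lerD2l expR_le1 mulNr oppr_le0 divr_ge0 // ltW.
Qed.

Lemma ln_add_inv_ge (R : realType) (x y : R) : 1 <= x -> 1 <= y ->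
  - (ln x + ln y) / 2 <= ln (x^-1 + y^-1).
Proof.
move=> x1 y1; have x0 : 0 < x by lra.
have y0 : 0 < y by lra.
have -> : x^-1 + y^-1 = (x + y) / (x * y) by field; rewrite !lt0r_neq0.
rewrite lnM ?posrE ?addr_gt0 ?invr_gt0 ?mulr_gt0 // lnV ?posrE ?mulr_gt0 //.
rewrite lnM ?posrE //.
have : ln x <= ln (x + y) by rewrite ler_ln ?posrE ?addr_gt0 //; lra.
have : ln y <= ln (x + y) by rewrite ler_ln ?posrE ?addr_gt0 //; lra.
lra.
Qed.

Section Bounds.
Variables (R : realType) (I : finType) (s : I -> R) (P : {set I}) (K : nat).

Lemma DCG_ge_hits (A : {set I}) : A \subset topK_hit_set s K P ->
  \sum_(i in A) (rank_pos s i)%:R^-1 <= DCG K s P.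
Proof.
move=> AH; have AP : A \subset P.
  by apply/fintype.subsetP => i /(fintype.subsetP AH)/topK_hit_setP[].
apply: le_trans (sumr_le_subset AP _); last first.
  by move=> i _; rewrite !divr_ge0 ?ln_ge0 ?ler1n.
apply: ler_sum => i /(fintype.subsetP AH)/topK_hit_setP[_ iK _].
by rewrite iK inv_le_dcg_gain ?rank_pos_gt0.
Qed.

Lemma SL_loss_ge_hits (tw td : R) (A : {set I}) : 0 < tw -> 0 < td ->
  A \subset topK_hit_set s K P ->
  \sum_(i in A) ln (rank_pos s i)%:R / 2 <= SL_loss K tw td s P.
Proof.
move=> tw0 td0 AH; have AP : A \subset P.
  by apply/fintype.subsetP => i /(fintype.subsetP AH)/topK_hit_setP[].
have rank_le_ln i : ln (rank_pos s i)%:R <= ln (\sum_j expR ((s j - s i) / td)).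
  have r0 : 0 < (rank_pos s i)%:R :> R by rewrite ltr0n rank_pos_gt0.
  have rS := rank_pos_le_sum_expR s i td0.
  by rewrite ler_ln ?posrE // (lt_le_trans r0).
apply: le_trans (sumr_le_subset AP _); last first.
  move=> i _; rewrite mulr_ge0 ?(ltW (sigma_w_gt0 _ _)) //.
  by apply: le_trans (rank_le_ln i); rewrite ln_ge0 ?rank_pos_ge1.
apply: ler_sum => i /(fintype.subsetP AH)/topK_hit_setP[_ _ qi].
by rewrite mulrC ler_pM ?ln_ge0 ?sigma_w_ge_half ?subr_ge0 ?rank_pos_ge1.
Qed.

End Bounds.

Theorem theorem3p2 (R : realType) (I : finType) (s : I -> R) (P : {set I})
    (K : nat) (tw td : R) :
  (1 <= K)%N -> 0 < tw -> 0 < td ->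
  ((1 < hits K s P)%N -> - ln (DCG K s P) <= SL_loss K tw td s P) /\
  (hits K s P = 1%N -> - (1 / 2) * ln (DCG K s P) <= SL_loss K tw td s P).
Proof.
move=> _ tw0 td0.
have rank_gt0 i : 0 < (rank_pos s i)%:R :> R by rewrite ltr0n rank_pos_gt0.
have rank_inv_gt0 i : 0 < (rank_pos s i)%:R^-1 :> R by rewrite invr_gt0.
have ln_le_lnDCG x : 0 < x -> x <= DCG K s P -> ln x <= ln (DCG K s P).
  by move=> x0 xD; rewrite ler_ln ?posrE // (lt_le_trans x0).
split.
  move=> /card_gt1P[a [b [aH bH ab]]].
  have abH : [set a; b] \subset topK_hit_set s K P.
    by apply/fintype.subsetP => i /set2P[]->.
  have := DCG_ge_hits abH; have := SL_loss_ge_hits tw0 td0 abH.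
  rewrite !big_setU1 ?inE // !big_set1 /= => hL hD.
  have := ln_le_lnDCG _ (addr_gt0 (rank_inv_gt0 a) (rank_inv_gt0 b)) hD.
  have := ln_add_inv_ge (rank_pos_ge1 s a) (rank_pos_ge1 s b).
  lra.
move=> /eqP/cards1P[a Ha].
have aH : [set a] \subset topK_hit_set s K P by rewrite -Ha subxx.
have := DCG_ge_hits aH; have := SL_loss_ge_hits tw0 td0 aH.
rewrite !big_set1 => hL hD.
have := ln_le_lnDCG _ (rank_inv_gt0 a) hD.
rewrite lnV ?posrE //.
lra.
Qed.
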